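(* (a) Fix an odd positive integer $k$. For a permutation of $[n]$ chosen uniformly among those with all cycle lengths odd, the expected number $\mathbb{E}_o^{(n)}Y_k$ of elements in $k$-cycles satisfies $\mathbb{E}_o^{(n)}Y_k=1+\frac{k+1}{2n}+O(n^{-2})$ as $n\to\infty$ through even values, and $\mathbb{E}_o^{(n)}Y_k=1+\frac{k-1}{2n}+O(n^{-2})$ as $n\to\infty$ through odd values. (b) Fix an even positive integer $k$. For a permutation of $[n]$ chosen uniformly among those with all cycle lengths even, $\mathbb{E}_e^{(n)}Y_k=1+\frac{k}{2n}+O(n^{-2})$ as $n\to\infty$ through even values.
   Context: $\mathbb{E}_o^{(n)}$ (resp. $\mathbb{E}_e^{(n)}$) denotes expectation under the uniform measure on permutations of $[n]$ with all cycle lengths odd (resp. even). $Y_k=kX_k$, where $X_k$ is the number of $k$-cycles, i.e. $Y_k$ is the number of elements lying in $k$-cycles. *)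

From HB Require Import structures.
From mathcomp Require Import all_boot all_order all_algebra all_fingroup.
Set Implicit Arguments. Unset Strict Implicit. Unset Printing Implicit Defensive.
Import Order.TTheory GRing.Theory Num.Theory.

Definition all_cycles_odd n (s : 'S_n) : bool :=
  [forall x : 'I_n, odd #|porbit s x|].

Definition all_cycles_even n (s : 'S_n) : bool :=
  [forall x : 'I_n, ~~ odd #|porbit s x|].

Definition Yk n (k : nat) (s : 'S_n) : nat :=
  #|[set x : 'I_n | #|porbit s x| == k]|.

Definition unif_exp (R : fieldType) n (P : pred 'S_n) (k : nat) : R :=
  ((\sum_(s | P s) Yk k s)%:R / #|[set s | P s]|%:R)%R.

Definition E_o (R : fieldType) n k : R := unif_exp R (@all_cycles_odd n) k.
Definition E_e (R : fieldType) n k : R := unif_exp R (@all_cycles_even n) k.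

(* Let N(n) count permutations of [n] whose cycle lengths all satisfy P. Placing the
   element n+1 into a (j+1)-cycle gives N(n+1) = sum_j P(j+1) n^_j N(n-j), and the same
   count gives sum_s Y_k(s) = n^_k N(n-k). For P = odd or P = even this recursion
   collapses to N(2m+2) = (2m+1)^2 N(2m) (and N(2m+1) = (2m+1) N(2m) for P = odd), so
   E Y_k = n^_k N(n-k) / N(n) is a ratio prod_t (2(j+t)+2)/(2(j+t)+1) of q factors,
   each 1 + 1/n + O(n^-2); hence E Y_k = 1 + q/n + O(n^-2). *)

From mathcomp Require Import all_boot all_order all_algebra all_fingroup.
From mathcomp Require Import ring lra zify.
Import Order.TTheory GRing.Theory Num.Theory.
Set Implicit Arguments. Unset Strict Implicit. Unset Printing Implicit Defensive.

Local Open Scope group_scope.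

Section PorbitFacts.
Variable T : finType.
Implicit Types (s : {perm T}) (x y : T).

Lemma card_porbit_gt0 s x : 0 < #|porbit s x|.
Proof. by rewrite lt0n card_porbit_neq0. Qed.

Lemma permX_card_porbit s x : (s ^+ #|porbit s x|) x = x.
Proof. by rewrite permX iter_porbit. Qed.

Lemma permX_porbit_neq s x i : 0 < i < #|porbit s x| -> (s ^+ i) x != x.
Proof.
case/andP=> i_gt0 lt_i; apply: contraTneq i_gt0 => sx_x.
have : nth x (traject s x #|porbit s x|) i = nth x (traject s x #|porbit s x|) 0.
  by rewrite !nth_traject ?card_porbit_gt0 // -permX sx_x.
move/eqP; rewrite nth_uniq ?size_traject ?card_porbit_gt0 ?uniq_traject_porbit //.
by move/eqP->.
Qed.

Lemma card_porbit_period s x m : 0 < m -> (s ^+ m) x = x ->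
  (forall i, 0 < i < m -> (s ^+ i) x != x) -> #|porbit s x| = m.
Proof.
move=> m_gt0 sx_x min_m; case: (ltngtP m #|porbit s x|) => // lt_m.
  by move: (@permX_porbit_neq s x m); rewrite m_gt0 lt_m sx_x eqxx => /(_ isT).
have := min_m _ (andb_true_intro (conj (card_porbit_gt0 s x) lt_m)).
by rewrite permX_card_porbit eqxx.
Qed.

Lemma porbit_lt s x y : y \in porbit s x ->
  exists2 i, i < #|porbit s x| & y = (s ^+ i) x.
Proof. by rewrite porbit_traject => /trajectP[i lt ->]; exists i; rewrite ?permX. Qed.

Lemma porbit_transport (T' : finType) (t : {perm T'}) (f : T -> T') s x :
  (forall i, (t ^+ i) (f x) = f ((s ^+ i) x)) -> porbit t (f x) = f @: porbit s x.
Proof.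
move=> f_iter; apply/setP=> z.
apply/porbitP/imsetP => [[i ->]|[y /porbitP[i ->] ->]]; last by exists i.
by exists ((s ^+ i) x); rewrite ?mem_porbit.
Qed.

Lemma card_porbit_transport (T' : finType) (t : {perm T'}) (f : T -> T') s x :
  injective f -> (forall i, (t ^+ i) (f x) = f ((s ^+ i) x)) ->
  #|porbit t (f x)| = #|porbit s x|.
Proof. by move=> f_inj /porbit_transport->; rewrite card_imset. Qed.

End PorbitFacts.

Lemma porbitJ (T : finType) (s u : {perm T}) x :
  porbit (s ^ u) (u x) = u @: porbit s x.
Proof. by apply: porbit_transport => i; rewrite -conjXg permJ. Qed.

Lemma card_porbitJ (T : finType) (s u : {perm T}) x :
  #|porbit (s ^ u) (u x)| = #|porbit s x|.
Proof. by rewrite porbitJ card_imset //; apply: perm_inj. Qed.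

Section CycleConstraint.
Variables (P : pred nat) (T : finType).
Implicit Types (s : {perm T}) (x c : T).

Definition cycles_in s := [forall x, P #|porbit s x|].

Definition other_cycles_in s c :=
  [forall z, (z \notin porbit s c) ==> P #|porbit s z|].

Definition cycle_at c k s := (#|porbit s c| == k) && other_cycles_in s c.

Definition count_cycle_at c k := #|[set s | cycle_at c k s]|.

Lemma other_cycles_inJ s u c : other_cycles_in (s ^ u) (u c) = other_cycles_in s c.
Proof.
apply/forallP/forallP=> H z.
  by move: (H (u z)); rewrite porbitJ mem_imset ?card_porbitJ //; apply: perm_inj.
rewrite -[z](permKV u); move: (H (u^-1 z)).
by rewrite porbitJ mem_imset ?card_porbitJ //; apply: perm_inj.
Qed.

Lemma cycle_atJ c k s (u : {perm T}) : cycle_at (u c) k (s ^ u) = cycle_at c k s.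
Proof. by rewrite /cycle_at card_porbitJ other_cycles_inJ. Qed.

Lemma count_cycle_at_indep c d k : count_cycle_at c k = count_cycle_at d k.
Proof.
pose u := tperm c d; rewrite /count_cycle_at.
have -> : [set s | cycle_at d k s] = (fun s => s ^ u) @: [set s | cycle_at c k s].
  apply/setP=> z; rewrite inE; apply/idP/imsetP => [H|[s]]; last first.
    by rewrite inE => H ->; rewrite -[d](tpermL c d) cycle_atJ.
  exists (z ^ u^-1); last by rewrite conjgKV.
  by rewrite inE -(cycle_atJ _ _ _ u) conjgKV /u tpermL.
by rewrite card_imset //; apply: conjg_inj.
Qed.

Lemma count_cycle_at0 c : count_cycle_at c 0 = 0.
Proof. by apply: eq_card0 => s; rewrite inE /cycle_at (negbTE (card_porbit_neq0 _ _)). Qed.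

Lemma cycles_inE s x : cycles_in s = P #|porbit s x| && other_cycles_in s x.
Proof.
apply/forallP/andP=> [H|[Px Hothers] z].
  by split=> //; apply/forallP=> z; apply/implyP.
case: (boolP (z \in porbit s x)) => [|zx]; last by move/forallP/(_ z)/implyP: Hothers; apply.
by rewrite -eq_porbit_mem => /eqP->.
Qed.

Lemma cycles_in_cycle_at s x k :
  cycles_in s && (#|porbit s x| == k) = P k && cycle_at x k s.
Proof.
by rewrite (cycles_inE s x) /cycle_at; case: eqP => [->|]; rewrite ?andbT ?andbF.
Qed.

End CycleConstraint.

Section InsertMax.
Variables (P : pred nat) (n : nat).
Implicit Types (r : 'S_n) (c : 'I_n.+1).

Definition lift_max r : 'S_n.+1 := lift_perm ord_max ord_max r.

(* [insert_max c r] maps c to ord_max and ord_max to r c: it inserts ord_max into the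
   cycle of r through c right after c (as a fixed point when c = ord_max). Every
   permutation of 'I_n.+1 arises exactly once this way. *)
Definition insert_max c r : 'S_n.+1 := tperm c ord_max * lift_max r.

Lemma lift_max_max r : lift_max r ord_max = ord_max.
Proof. exact: lift_perm_id. Qed.

Lemma lift_max_lift r y : lift_max r (lift ord_max y) = lift ord_max (r y).
Proof. exact: lift_perm_lift. Qed.

Lemma lift_maxX r i y : (lift_max r ^+ i) (lift ord_max y) = lift ord_max ((r ^+ i) y).
Proof. by elim: i => [|i IH]; rewrite ?expg0 ?perm1 // !expgSr !permM IH lift_max_lift. Qed.

Lemma insert_max_c c r : insert_max c r c = ord_max.
Proof. by rewrite permM tpermL lift_max_max. Qed.

Lemma insert_max_bij : bijective (fun p : 'I_n.+1 * 'S_n => insert_max p.1 p.2).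
Proof.
apply: inj_card_bij => [[c1 r1] [c2 r2] /= E|]; last first.
  by rewrite card_prod !card_Sn card_ord factS.
have ec : c1 = c2.
  by apply: (@perm_inj _ (insert_max c1 r1)); rewrite insert_max_c E insert_max_c.
subst c2; move/mulgI: E => E; congr (_, _).
by apply/permP=> y; apply: (@lift_inj _ ord_max); rewrite -!lift_max_lift E.
Qed.

Lemma card_insert_max (Q : pred 'S_n.+1) :
  #|[set t | Q t]| = (\sum_(c < n.+1) #|[set r | Q (insert_max c r)]|)%N.
Proof.
rewrite -sum1_card (reindex _ (onW_bij _ insert_max_bij)) /=.
rewrite (eq_bigl (fun p : 'I_n.+1 * 'S_n => xpredT p.1 && Q (insert_max p.1 p.2))); last first.
  by move=> p; rewrite inE.
rewrite -(pair_big_dep xpredT (fun c r => Q (insert_max c r)) (fun _ _ => 1%N)) /=.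
by apply: eq_bigr => c _; rewrite -sum1_card; apply: eq_bigl => r; rewrite !inE.
Qed.

Lemma insert_max_max r : insert_max ord_max r = lift_max r.
Proof. by rewrite /insert_max tperm1 mul1g. Qed.

Lemma card_porbit_lift_max_max r : #|porbit (lift_max r) ord_max| = 1%N.
Proof. by apply: card_porbit_period => // [|[|i]] //; rewrite expg1 lift_max_max. Qed.

Lemma card_porbit_lift_max r y : #|porbit (lift_max r) (lift ord_max y)| = #|porbit r y|.
Proof. exact: card_porbit_transport (@lift_inj _ ord_max) (lift_maxX r ^~ y). Qed.

Lemma other_cycles_in_lift_max r : other_cycles_in P (lift_max r) ord_max = cycles_in P r.
Proof.
apply/forallP/forallP=> H z.
  move/implyP: (H (lift ord_max z)); rewrite card_porbit_lift_max; apply.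
  apply: contraL (neq_lift ord_max z) => /porbitP[i ->].
  by rewrite permX_fix ?lift_max_max ?eqxx.
apply/implyP=> zn; case: (unliftP ord_max z) zn => [y ->|->]; last by rewrite porbit_id.
by rewrite card_porbit_lift_max.
Qed.

Section InsertIntoCycle.
Variables (r : 'S_n) (c : 'I_n).
Let t := insert_max (lift ord_max c) r.
Let L := #|porbit r c|.

Lemma insert_max_lift_max : t ord_max = lift ord_max (r c).
Proof. by rewrite permM tpermR lift_max_lift. Qed.

Lemma insert_max_lift_neq y : y != c -> t (lift ord_max y) = lift ord_max (r y).
Proof.
move=> y_neq_c; rewrite permM tpermD ?lift_max_lift ?neq_lift //.
by rewrite (inj_eq (@lift_inj _ ord_max)) eq_sym.
Qed.

Lemma insert_maxX_max i : i < L -> (t ^+ i.+1) ord_max = lift ord_max ((r ^+ i.+1) c).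
Proof.
elim: i => [|i IH] lt_iL; first by rewrite !expg1 insert_max_lift_max.
rewrite expgSr permM IH ?(ltnW lt_iL) // insert_max_lift_neq -?permM -?expgSr //.
by apply: permX_porbit_neq; rewrite /= lt_iL.
Qed.

Lemma card_porbit_insert_max : #|porbit t ord_max| = L.+1.
Proof.
have L_gt0 : 0 < L := card_porbit_gt0 r c.
apply: card_porbit_period => // [|[|i] //= lt_iL].
  have := @insert_maxX_max L.-1; rewrite prednK // permX_card_porbit => tX.
  by rewrite expgSr permM tX ?ltn_predL // insert_max_c.
by rewrite insert_maxX_max // eq_sym neq_lift.
Qed.

Lemma insert_maxX_lift y : y \notin porbit r c ->
  forall i, (t ^+ i) (lift ord_max y) = lift ord_max ((r ^+ i) y).
Proof.
move=> y_out; elim=> [|i IH]; first by rewrite !expg0 !perm1.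
rewrite expgSr permM IH insert_max_lift_neq -?permM -?expgSr //.
by apply: contraNneq y_out => <-; rewrite porbit_sym mem_porbit.
Qed.

Lemma lift_porbit_insert_max y : y \in porbit r c -> lift ord_max y \in porbit t ord_max.
Proof.
rewrite -(porbit_perm r 1) expg1 => /porbit_lt[i]; rewrite (porbit_perm r 1 c) => lt_iL ->.
by rewrite -permM -expgS -insert_maxX_max // mem_porbit.
Qed.

Lemma other_cycles_in_insert_max : other_cycles_in P t ord_max = other_cycles_in P r c.
Proof.
apply/forallP/forallP=> H y.
  apply/implyP=> y_out; move/implyP: (H (lift ord_max y)).
  rewrite (card_porbit_transport (@lift_inj _ ord_max) (insert_maxX_lift y_out)); apply.
  rewrite porbit_sym (porbit_transport (insert_maxX_lift y_out)).
  by apply/imsetP=> -[w _ /eqP]; rewrite (negbTE (neq_lift _ _)).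
apply/implyP; case: (unliftP ord_max y) => [w ->|->]; last by rewrite porbit_id.
move=> w_out; have w_out' : w \notin porbit r c.
  by apply: contra w_out; apply: lift_porbit_insert_max.
move/implyP: (H w) => /(_ w_out').
by rewrite (card_porbit_transport (@lift_inj _ ord_max) (insert_maxX_lift w_out')).
Qed.

Lemma cycle_at_insert_max k : cycle_at P ord_max k.+1 t = cycle_at P c k r.
Proof. by rewrite /cycle_at card_porbit_insert_max other_cycles_in_insert_max eqSS. Qed.

End InsertIntoCycle.

Lemma count_cycle_at_max_S k : count_cycle_at P (ord_max : 'I_n.+1) k.+1 =
  ((k == 0) * #|[set r : 'S_n | cycles_in P r]| + \sum_(c < n) count_cycle_at P c k)%N.
Proof.
rewrite /count_cycle_at card_insert_max big_ord_recr /= addnC; congr (_ + _)%N.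
  case: k => [|k]; [rewrite mul1n; apply: eq_card|rewrite mul0n; apply: eq_card0] => r;
    by rewrite !inE /cycle_at insert_max_max card_porbit_lift_max_max ?other_cycles_in_lift_max.
apply: eq_bigr => c _; apply: eq_card => r; rewrite !inE -cycle_at_insert_max.
by congr (cycle_at _ _ _ (insert_max _ r)); apply: val_inj; rewrite /= /bump leqNgt ltn_ord.
Qed.

End InsertMax.

Local Close Scope group_scope.

Lemma card_set_sum (T : finType) (Q : pred T) : #|[set s | Q s]| = (\sum_s Q s)%N.
Proof. by rewrite -sum1_card big_mkcond /=; apply: eq_bigr => s _; rewrite inE; case: (Q s). Qed.

Section Counting.
Variable P : pred nat.

Definition count_cycles_in n := #|[set s : 'S_n | cycles_in P s]|.

Lemma sum_count_cycle_at n k :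
  (\sum_(c < n.+1) count_cycle_at P c k = n.+1 * count_cycle_at P (ord_max : 'I_n.+1) k)%N.
Proof.
rewrite (eq_bigr (fun _ => count_cycle_at P (ord_max : 'I_n.+1) k)) => [|c _].
  by rewrite sum_nat_const card_ord.
exact: count_cycle_at_indep.
Qed.

(* The (j+1)-cycle through ord_max is an ordered choice of j of the other n points. *)
Lemma count_cycle_atE n j :
  count_cycle_at P (ord_max : 'I_n.+1) j.+1 = (n ^_ j * count_cycles_in (n - j))%N.
Proof.
elim: n j => [|m IH] [|j]; rewrite count_cycle_at_max_S ?big_ord0 ?addn0 ?ffactn0 //.
  by rewrite sum_count_cycle_at count_cycle_at0 muln0 addn0 subn0.
by rewrite mul0n add0n sum_count_cycle_at IH ffactSS subSS mulnA.
Qed.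

Lemma count_cycles_inS n :
  count_cycles_in n.+1 = (\sum_(j < n.+1) P j.+1 * (n ^_ j * count_cycles_in (n - j)))%N.
Proof.
rewrite {1}/count_cycles_in card_set_sum.
rewrite (eq_bigr (fun s : 'S_n.+1 =>
  \sum_(j < n.+1) (P j.+1 && cycle_at P ord_max j.+1 s : nat))%N) => [|s _].
  rewrite exchange_big /=; apply: eq_bigr => j _.
  rewrite -count_cycle_atE /count_cycle_at card_set_sum.
  by case: (P j.+1); rewrite ?mul1n // mul0n big1.
have len_lt : #|porbit s ord_max|.-1 < n.+1.
  by rewrite prednK ?card_porbit_gt0 // (leq_trans (max_card _)) ?card_ord.
rewrite (bigD1 (Ordinal len_lt)) //= big1 ?addn0 => [|j /eqP j_neq].
  by rewrite prednK ?card_porbit_gt0 // -cycles_in_cycle_at eqxx andbT.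
rewrite /cycle_at; case: eqP => [len_j|]; rewrite ?andbF //.
by case: j_neq; apply: val_inj; rewrite /= len_j.
Qed.

Lemma sum_Yk n k : 0 < k ->
  (\sum_(s : 'S_n | cycles_in P s) Yk k s = P k * (n ^_ k * count_cycles_in (n - k)))%N.
Proof.
case: k => // k _.
have Yk_sum (s : 'S_n) : (if cycles_in P s then Yk k.+1 s else 0)%N =
                         (\sum_x (P k.+1 && cycle_at P x k.+1 s : nat))%N.
  rewrite /Yk card_set_sum; case: (boolP (cycles_in P s)) => Ps.
    by apply: eq_bigr => x _; rewrite -cycles_in_cycle_at Ps.
  by rewrite big1 // => x _; rewrite -cycles_in_cycle_at (negbTE Ps).
have count_sum (x : 'I_n) : (\sum_s (P k.+1 && cycle_at P x k.+1 s : nat))%N =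
                            (P k.+1 * count_cycle_at P x k.+1)%N.
  by rewrite /count_cycle_at card_set_sum; case: (P k.+1); rewrite ?mul1n // mul0n big1.
rewrite big_mkcond (eq_bigr _ (fun s _ => Yk_sum s)) exchange_big.
rewrite (eq_bigr _ (fun x _ => count_sum x)).
clear Yk_sum count_sum; case: n => [|n]; first by rewrite big_ord0 ffact0n /= mul0n muln0.
by rewrite -big_distrr /= sum_count_cycle_at count_cycle_atE ffactSS subSS !mulnA.
Qed.

Lemma count_cycles_in0 : count_cycles_in 0 = 1%N.
Proof.
rewrite /count_cycles_in (eq_card (B := predT)) ?card_Sn // => s.
by rewrite !inE; apply/forallP=> -[].
Qed.

Lemma count_cycles_in1 : count_cycles_in 1 = P 1.
Proof.
by rewrite count_cycles_inS big_ord_recl big_ord0 count_cycles_in0 ffactn0 !muln1 addn0.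
Qed.

Lemma count_cycles_in2 : count_cycles_in 2 = (P 1 + P 2)%N.
Proof.
rewrite count_cycles_inS !big_ord_recl big_ord0 /= count_cycles_in1 count_cycles_in0.
by rewrite ffactn0 ffactn1; case: (P 1); case: (P 2).
Qed.

(* For a 2-periodic P the terms j >= 2 of the recursion at n.+3 reassemble, after
   factoring out n.+2 * n.+1, into the recursion at n.+1. *)
Lemma count_cycles_in_rec2 n : (forall j, P j.+3 = P j.+1) ->
  count_cycles_in n.+3 = (P 1 * count_cycles_in n.+2 +
    P 2 * (n.+2 * count_cycles_in n.+1) + n.+2 * n.+1 * count_cycles_in n.+1)%N.
Proof.
move=> P_periodic.
rewrite count_cycles_inS 2!big_ord_recl /= ffactn0 ffactn1 subn0 mul1n.
rewrite [count_cycles_in n.+1]count_cycles_inS /= -addnA; congr (_ + (_ + _))%N.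
rewrite big_distrr; apply: eq_bigr => i _.
by rewrite /bump /= P_periodic 2!ffactSS !subSS; ring.
Qed.

End Counting.

Definition count_odd_cycles := count_cycles_in odd.
Definition count_even_cycles := count_cycles_in (fun m => ~~ odd m).

Lemma count_odd_cycles_double m :
  count_odd_cycles m.*2.+1 = (m.*2.+1 * count_odd_cycles m.*2)%N /\
  count_odd_cycles m.*2.+2 = (m.*2.+1 ^ 2 * count_odd_cycles m.*2)%N.
Proof.
have odd_periodic j : odd j.+3 = odd j.+1 by rewrite /= negbK.
rewrite /count_odd_cycles; elim: m => [|m [IH1 IH2]].
  by rewrite /= count_cycles_in2 count_cycles_in1 count_cycles_in0.
have Hodd : count_cycles_in odd m.+1.*2.+1 = (m.+1.*2.+1 * count_cycles_in odd m.+1.*2)%N.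
  by rewrite doubleS count_cycles_in_rec2 // IH2 IH1 /=; ring.
split=> //; rewrite doubleS count_cycles_in_rec2 // -doubleS Hodd doubleS IH2 /=; ring.
Qed.

Lemma count_even_cycles_doubleS m :
  count_even_cycles m.*2.+2 = (m.*2.+1 ^ 2 * count_even_cycles m.*2)%N.
Proof.
have even_periodic j : ~~ odd j.+3 = ~~ odd j.+1 by rewrite /= negbK.
rewrite /count_even_cycles; case: m => [|m]; first by rewrite /= count_cycles_in2 count_cycles_in0.
by rewrite doubleS count_cycles_in_rec2 //=; ring.
Qed.

Definition odd_prod j q := (\prod_(t < q) (j + t).*2.+1)%N.
Definition even_prod j q := (\prod_(t < q) (j + t).*2.+2)%N.

Lemma odd_prodS j q : odd_prod j q.+1 = (odd_prod j q * (j + q).*2.+1)%N.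
Proof. exact: big_ord_recr. Qed.

Lemma even_prodS j q : even_prod j q.+1 = (even_prod j q * (j + q).*2.+2)%N.
Proof. exact: big_ord_recr. Qed.

Lemma odd_prod_gt0 j q : 0 < odd_prod j q.
Proof. by rewrite prodn_gt0. Qed.

Lemma count_odd_cycles_even_gt0 m : 0 < count_odd_cycles m.*2.
Proof.
elim: m => [|m IH]; first by rewrite /count_odd_cycles count_cycles_in0.
by rewrite doubleS (count_odd_cycles_double m).2 muln_gt0 expn_gt0 IH.
Qed.

Lemma count_odd_cycles_odd_gt0 m : 0 < count_odd_cycles m.*2.+1.
Proof. by rewrite (count_odd_cycles_double m).1 muln_gt0 count_odd_cycles_even_gt0. Qed.

Lemma count_even_cycles_gt0 m : 0 < count_even_cycles m.*2.
Proof.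
elim: m => [|m IH]; first by rewrite /count_even_cycles count_cycles_in0.
by rewrite doubleS count_even_cycles_doubleS muln_gt0 expn_gt0 IH.
Qed.

Lemma count_odd_cycles_even_ratio j q :
  ((j + q).*2.+2 ^_ q.*2.+1 * count_odd_cycles j.*2.+1 * odd_prod j q.+1 =
   count_odd_cycles (j + q).*2.+2 * even_prod j q.+1)%N.
Proof.
elim: q => [|q IH].
  rewrite odd_prodS even_prodS /odd_prod /even_prod !big_ord0 !addn0 ffactn1.
  by case: (count_odd_cycles_double j) => -> ->; ring.
rewrite [odd_prod j q.+2]odd_prodS [even_prod j q.+2]even_prodS addnS doubleS 2!ffactSS.
case: (count_odd_cycles_double (j + q).+1) => _; rewrite doubleS => ->.
set F := (_ ^_ _)%N; set O1 := count_odd_cycles _; set A := odd_prod j q.+1.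
set O2 := count_odd_cycles _; set B := even_prod j q.+1.
transitivity ((j + q).*2.+4 * (j + q).*2.+3 * (j + q).*2.+3 * (F * O1 * A))%N; first ring.
by rewrite IH; ring.
Qed.

Lemma count_odd_cycles_odd_ratio j q :
  ((j + q).*2.+1 ^_ q.*2.+1 * count_odd_cycles j.*2 * odd_prod j q =
   count_odd_cycles (j + q).*2.+1 * even_prod j q)%N.
Proof.
elim: q => [|q IH].
  rewrite /odd_prod /even_prod !big_ord0 !addn0 ffactn1.
  by case: (count_odd_cycles_double j) => -> _; ring.
rewrite odd_prodS even_prodS addnS doubleS 2!ffactSS.
case: (count_odd_cycles_double (j + q).+1) => E1 _; rewrite doubleS in E1; rewrite E1.
case: (count_odd_cycles_double (j + q)) => E2 ->; rewrite E2 in IH.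
set F := (_ ^_ _)%N in IH *; set O1 := count_odd_cycles j.*2 in IH *.
set A := odd_prod j q in IH *; set O2 := count_odd_cycles (j + q).*2 in IH *.
set B := even_prod j q in IH *.
transitivity ((j + q).*2.+3 * (j + q).*2.+2 * (j + q).*2.+1 * (F * O1 * A))%N; first ring.
by rewrite IH; ring.
Qed.

Lemma count_even_cycles_ratio j q :
  ((j + q).*2 ^_ q.*2 * count_even_cycles j.*2 * odd_prod j q =
   count_even_cycles (j + q).*2 * even_prod j q)%N.
Proof.
elim: q => [|q IH]; first by rewrite /odd_prod /even_prod !big_ord0 !addn0 ffactn0 mul1n.
rewrite odd_prodS even_prodS addnS doubleS 2!ffactSS count_even_cycles_doubleS.
set F := (_ ^_ _)%N in IH *; set O1 := count_even_cycles j.*2 in IH *.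
set A := odd_prod j q in IH *; set O2 := count_even_cycles (j + q).*2 in IH *.
set B := even_prod j q in IH *.
transitivity ((j + q).*2.+2 * (j + q).*2.+1 * (j + q).*2.+1 * (F * O1 * A))%N; first ring.
by rewrite IH; ring.
Qed.

Local Open Scope ring_scope.

Lemma unif_exp_cycles_in (R : fieldType) (P : pred nat) n k : (0 < k)%N -> P k ->
  unif_exp R (@cycles_in P 'I_n) k =
  (n ^_ k * count_cycles_in P (n - k))%:R / (count_cycles_in P n)%:R.
Proof. by move=> k_gt0 Pk; rewrite /unif_exp sum_Yk // Pk mul1n. Qed.

Lemma divr_nat_cross (R : numFieldType) (a b c d : nat) : (a * c = b * d)%N ->
  (0 < b)%N -> (0 < c)%N -> a%:R / b%:R = d%:R / c%:R :> R.
Proof.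
move=> acbd b_gt0 c_gt0; apply/eqP.
by rewrite eqr_div ?pnatr_eq0 -?lt0n // -!natrM acbd mulnC.
Qed.

Lemma E_o_even (R : numFieldType) j q :
  E_o R (j + q).*2.+2 q.*2.+1 = (even_prod j q.+1)%:R / (odd_prod j q.+1)%:R.
Proof.
rewrite /E_o unif_exp_cycles_in /= ?odd_double // -/count_odd_cycles.
have -> : ((j + q).*2.+2 - q.*2.+1 = j.*2.+1)%N by lia.
apply: divr_nat_cross; rewrite ?count_odd_cycles_even_ratio ?odd_prod_gt0 //.
by rewrite -doubleS count_odd_cycles_even_gt0.
Qed.

Lemma E_o_odd (R : numFieldType) j q :
  E_o R (j + q).*2.+1 q.*2.+1 = (even_prod j q)%:R / (odd_prod j q)%:R.
Proof.
rewrite /E_o unif_exp_cycles_in /= ?odd_double // -/count_odd_cycles.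
have -> : ((j + q).*2.+1 - q.*2.+1 = j.*2)%N by lia.
apply: divr_nat_cross; rewrite ?count_odd_cycles_odd_ratio ?odd_prod_gt0 //.
exact: count_odd_cycles_odd_gt0.
Qed.

Lemma E_e_even (R : numFieldType) j q : (0 < q)%N ->
  E_e R (j + q).*2 q.*2 = (even_prod j q)%:R / (odd_prod j q)%:R.
Proof.
move=> q_gt0.
rewrite /E_e (@unif_exp_cycles_in _ (fun m => ~~ odd m)) ?odd_double ?double_gt0 //.
rewrite -/count_even_cycles; have -> : ((j + q).*2 - q.*2 = j.*2)%N by lia.
apply: divr_nat_cross; rewrite ?count_even_cycles_ratio ?odd_prod_gt0 //.
exact: count_even_cycles_gt0.
Qed.

Lemma prod_near_1Dx (R : realFieldType) (q : nat) (D : R) : 0 <= D ->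
  exists C : R, forall (x : R) (f : nat -> R), 0 < x -> x <= 1 ->
    (forall t, (t < q)%N -> `|f t - (1 + x)| <= D * x ^+ 2) ->
    `|\prod_(t < q) f t - (1 + q%:R * x)| <= C * x ^+ 2.
Proof.
move=> D_ge0; elim: q => [|q [C IH]].
  by exists 0 => x f _ _ _; rewrite big_ord0 mul0r addr0 subrr normr0 mul0r.
exists (C * (2 + D) + q%:R + (1 + q%:R) * D) => x f x_gt0 x_le1 f_near.
have prod_err := IH x f x_gt0 x_le1 (fun t lt_tq => f_near t (ltnW lt_tq)).
have last_err := f_near q (ltnSn q).
rewrite big_ord_recr /=.
set p := \prod_(i < q) f (widen_ord (leqnSn q) i) in prod_err *.
set u := p - (1 + q%:R * x) in prod_err; set e := f q - (1 + x) in last_err.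
have -> : p * f q - (1 + q.+1%:R * x) = u * f q + e * (1 + q%:R * x) + q%:R * x ^+ 2.
  by rewrite /u /e -natr1; ring.
have x2_ge0 : 0 <= x ^+ 2 by rewrite exprn_ge0 // ltW.
have x2_le1 : x ^+ 2 <= 1 by rewrite expr_le1 // ltW.
have fq_bound : `|f q| <= 2 + D.
  have -> : f q = e + (1 + x) by rewrite /e subrK.
  apply: (le_trans (ler_normD _ _)).
  have : `|1 + x| <= 2 by rewrite ger0_norm; lra.
  have : D * x ^+ 2 <= D by rewrite -{2}[D]mulr1 ler_wpM2l.
  lra.
have lin_bound : `|1 + q%:R * x| <= 1 + q%:R.
  rewrite ger0_norm; last by rewrite addr_ge0 // mulr_ge0 // ltW.
  by rewrite lerD2l -{2}[q%:R]mulr1 ler_wpM2l.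
have u_term : `|u * f q| <= C * x ^+ 2 * (2 + D) by rewrite normrM ler_pM.
have e_term : `|e * (1 + q%:R * x)| <= D * x ^+ 2 * (1 + q%:R) by rewrite normrM ler_pM.
have cross_term : `|q%:R * x ^+ 2| = q%:R * x ^+ 2 by rewrite ger0_norm // mulr_ge0.
apply: (le_trans (ler_normD _ _)); rewrite cross_term.
apply: (le_trans (lerD (ler_normD _ _) (lexx _))).
have -> : (C * (2 + D) + q%:R + (1 + q%:R) * D) * x ^+ 2 =
   C * x ^+ 2 * (2 + D) + D * x ^+ 2 * (1 + q%:R) + q%:R * x ^+ 2 by ring.
by rewrite lerD2r lerD.
Qed.

Lemma invr_nat_sub_bound (R : realFieldType) (a n K : nat) : (0 < a)%N -> (a <= n)%N ->
  (n <= a + K)%N -> (n <= a.*2)%N ->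
  `|(a%:R : R)^-1 - n%:R^-1| <= 2 * K%:R * (n%:R^-1) ^+ 2.
Proof.
move=> a_gt0 le_an le_naK le_n2a.
have a0 : (0 : R) < a%:R by rewrite ltr0n.
have n0 : (0 : R) < n%:R by rewrite ltr0n; lia.
have -> : (a%:R : R)^-1 - n%:R^-1 = (n%:R - a%:R) * (a%:R^-1 * n%:R^-1).
  by field; rewrite !lt0r_neq0.
have diff_ge0 : (0 : R) <= n%:R - a%:R by rewrite subr_ge0 ler_nat.
have diff_le : (n%:R - a%:R : R) <= K%:R.
  suff : (n%:R : R) <= a%:R + K%:R by lra.
  by rewrite -natrD ler_nat.
have inva_le : (a%:R : R)^-1 <= 2 * n%:R^-1.
  rewrite -subr_ge0.
  have -> : 2 * n%:R^-1 - (a%:R : R)^-1 = (a.*2%:R - n%:R) * (a%:R^-1 * n%:R^-1).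
    by rewrite -muln2 natrM; field; rewrite !lt0r_neq0.
  by rewrite mulr_ge0 ?subr_ge0 ?ler_nat // mulr_ge0 // invr_ge0 ltW.
have ninv_ge0 : (0 : R) <= n%:R^-1 by rewrite invr_ge0 ltW.
rewrite ger0_norm; last by rewrite mulr_ge0 // mulr_ge0 // invr_ge0 ltW.
have -> : 2 * K%:R * n%:R^-1 ^+ 2 = K%:R * (2 * n%:R^-1 * n%:R^-1) :> R by ring.
apply: ler_pM => //; first by rewrite mulr_ge0 // invr_ge0 ltW.
by rewrite ler_pM2r ?invr_gt0.
Qed.

Lemma even_odd_prod_ratio (R : numFieldType) j q :
  (even_prod j q)%:R / (odd_prod j q)%:R = \prod_(t < q) (1 + (((j + t).*2.+1)%:R : R)^-1).
Proof.
rewrite !natr_prod -prodf_div; apply: eq_bigr => t _.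
by rewrite -natr1 mulrDl divff ?pnatr_eq0 // mul1r addrC.
Qed.

(* Each factor 1 + 1/(2(j+t)+1) is 1 + 1/n up to O(n^-2), since n - (2(j+t)+1) <= 2q+1. *)
Lemma even_odd_prod_ratio_expansion (R : realFieldType) (q : nat) :
  exists C : R, forall j n : nat, (0 < n)%N -> (q <= j)%N ->
    ((j + q).*2 <= n <= (j + q).*2.+2)%N ->
    `|(even_prod j q)%:R / (odd_prod j q)%:R - (1 + q%:R / n%:R)| <= C / n%:R ^+ 2.
Proof.
have [|C HC] := @prod_near_1Dx R q (2 * (q.*2.+1)%:R); first by rewrite mulr_ge0.
exists C => j n n_gt0 le_qj /andP[n_ge n_le].
rewrite even_odd_prod_ratio -exprVn.
apply: (HC _ (fun t => 1 + (((j + t).*2.+1)%:R : R)^-1)) => [||t lt_tq];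
  rewrite ?invr_gt0 ?ltr0n ?invf_le1 ?ler1n ?ltr0n //.
have -> : forall u v : R, 1 + u - (1 + v) = u - v by move=> u v; ring.
apply: invr_nat_sub_bound; lia.
Qed.

Lemma natr_double_div (R : numFieldType) (m n : nat) :
  (m.*2)%:R / (2 * n%:R) = m%:R / n%:R :> R.
Proof. by rewrite -muln2 natrM invfM mulrA mulfK ?pnatr_eq0. Qed.

Unset Implicit Arguments.

Theorem proposition3p3 (R : realFieldType) :
  (forall k : nat, odd k ->
     (exists (C : R) (N : nat), forall n : nat, (N <= n)%N -> ~~ odd n ->
        `|E_o R n k - (1 + (k.+1)%:R / (2 * n%:R))| <= C / (n%:R ^+ 2))
  /\ (exists (C : R) (N : nat), forall n : nat, (N <= n)%N -> odd n ->
        `|E_o R n k - (1 + (k.-1)%:R / (2 * n%:R))| <= C / (n%:R ^+ 2)))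
  /\
  (forall k : nat, (0 < k)%N -> ~~ odd k ->
     exists (C : R) (N : nat), forall n : nat, (N <= n)%N -> ~~ odd n ->
        `|E_e R n k - (1 + k%:R / (2 * n%:R))| <= C / (n%:R ^+ 2)).
Proof.
split=> [k k_odd|k k_gt0 k_even]; pose q := k./2.
  have hk : k = q.*2.+1 by rewrite /q; lia.
  split.
    have [C HC] := even_odd_prod_ratio_expansion R q.+1.
    exists C, k.*2.+2 => n le_n n_even; pose j := (n./2 - q.+1)%N.
    have hn : n = (j + q).*2.+2 by rewrite /j; lia.
    rewrite [in E_o _ n]hn hk E_o_even -doubleS natr_double_div.
    by apply: HC; lia.
  have [C HC] := even_odd_prod_ratio_expansion R q.
  exists C, k.*2.+2 => n le_n n_odd; pose j := (n./2 - q)%N.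
  have hn : n = (j + q).*2.+1 by rewrite /j; lia.
  rewrite [in E_o _ n]hn hk E_o_odd /= natr_double_div.
  by apply: HC; lia.
have hk : k = q.*2 by rewrite /q; lia.
have [C HC] := even_odd_prod_ratio_expansion R q.
exists C, k.*2.+2 => n le_n n_even; pose j := (n./2 - q)%N.
have hn : n = (j + q).*2 by rewrite /j; lia.
rewrite [in E_e _ n]hn hk E_e_even ?natr_double_div; last by lia.
by apply: HC; lia.
Qed.
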